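(* Let $n\geq2$. The group $hP\Sigma_n$ is generated by the automorphisms $\chi_{ij}$ ($1\leq i\neq j\leq n$), and its abelianization $hP\Sigma_n^{ab}$ is the free abelian group with basis the classes $\overline\chi_{ij}$.
   Context: $RF_n=\langle x_1,\dots,x_n\mid [x_i,w^{-1}x_iw]=1\ (w\in F_n)\rangle$ is the reduced free group, with $[a,b]=aba^{-1}b^{-1}$. $hP\Sigma_n$ is the subgroup of $\mathrm{Aut}(RF_n)$ of automorphisms sending each $x_i$ to a conjugate of $x_i$. $\chi_{ij}$ is the automorphism of $RF_n$ sending $x_i$ to $x_j^{-1}x_ix_j$ and fixing all $x_k$, $k\neq i$. *)

(* Reduced free group RF_n presented as words modulo the
   congruence generated by free cancellation and the defining relators;
   automorphisms represented by images of generators (substitutions). *)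
From mathcomp Require Import all_boot all_algebra.
Set Implicit Arguments. Unset Strict Implicit. Unset Printing Implicit Defensive.

(* letters of F_n: (i, true) = x_i, (i, false) = x_i^{-1} *)
Definition letter (n : nat) := ('I_n * bool)%type.
Definition word (n : nat) := seq (letter n).
Definition linv n (a : letter n) : letter n := (a.1, ~~ a.2).
Definition winv n (w : word n) : word n := rev (map (@linv n) w).
Definition gen n (i : 'I_n) : word n := [:: (i, true)].
Definition wcomm n (a b : word n) : word n := a ++ b ++ winv a ++ winv b.

(* equality in RF_n = <x_1..x_n | [x_i, w^{-1} x_i w] = 1 (w in F_n)> :
   the congruence on words generated by free cancellation and the relators *)
Inductive rf_eq n : word n -> word n -> Prop :=
| rf_refl w : rf_eq w w
| rf_sym u v : rf_eq u v -> rf_eq v u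
| rf_trans u v w : rf_eq u v -> rf_eq v w -> rf_eq u w
| rf_cancel u v (a : letter n) : rf_eq (u ++ a :: linv a :: v) (u ++ v)
| rf_rel u v (i : 'I_n) (w : word n) :
    rf_eq (u ++ wcomm (gen i) (winv w ++ gen i ++ w) ++ v) (u ++ v).

Definition wsubst n (s : 'I_n -> word n) (w : word n) : word n :=
  flatten (map (fun a : letter n => if a.2 then s a.1 else winv (s a.1)) w).

Definition respects n (s : 'I_n -> word n) :=
  forall u v, rf_eq u v -> rf_eq (wsubst s u) (wsubst s v).

Definition aut_id n : 'I_n -> word n := @gen n.
Definition aut_comp n (s t : 'I_n -> word n) : 'I_n -> word n :=
  fun i => wsubst s (t i).
Definition aut_eq n (s t : 'I_n -> word n) := forall i, rf_eq (s i) (t i).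
Definition aut_inverse n (s t : 'I_n -> word n) :=
  [/\ respects s, respects t, aut_eq (aut_comp s t) (@aut_id n)
    & aut_eq (aut_comp t s) (@aut_id n)].
Definition is_aut n (s : 'I_n -> word n) := exists t, aut_inverse s t.

Definition in_hPSigma n (s : 'I_n -> word n) :=
  is_aut s /\ forall i, exists w : word n, rf_eq (s i) (winv w ++ gen i ++ w).

Definition chi n (i j : 'I_n) : 'I_n -> word n :=
  fun k => if k == i then winv (gen j) ++ gen i ++ gen j else gen k.
Definition chi_inv n (i j : 'I_n) : 'I_n -> word n :=
  fun k => if k == i then gen j ++ gen i ++ winv (gen j) else gen k.

Fixpoint chi_prod n (l : seq ('I_n * 'I_n * bool)) : 'I_n -> word n :=
  match l with
  | [::] => @aut_id n
  | (i, j, b) :: l' => aut_comp (if b then chi i j else chi_inv i j) (chi_prod l')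
  end.

Definition chi_pow n (i j : 'I_n) (e : int) : 'I_n -> word n :=
  match e with
  | Posz k => iter k (aut_comp (chi i j)) (@aut_id n)
  | Negz k => iter k.+1 (aut_comp (chi_inv i j)) (@aut_id n)
  end.

Definition offdiag n : seq ('I_n * 'I_n) :=
  [seq p <- enum {: 'I_n * 'I_n} | p.1 != p.2].

(* prod_{i <> j} chi_ij ^ (e i j)  (a representative of sum e_ij chi-bar_ij) *)
Definition chi_lin n (e : 'I_n -> 'I_n -> int) : 'I_n -> word n :=
  foldr (fun p acc => aut_comp (chi_pow p.1 p.2 (e p.1 p.2)) acc) (@aut_id n) (offdiag n).

(* membership in the commutator subgroup [hPSigma_n, hPSigma_n]:
   finite products of commutators g h g^{-1} h^{-1} with g, h in hPSigma_n *)
Inductive in_comm_hP n : ('I_n -> word n) -> Prop :=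
| cs_id s : aut_eq s (@aut_id n) -> in_comm_hP s
| cs_mul s g g' h h' t :
    in_hPSigma g -> aut_inverse g g' ->
    in_hPSigma h -> aut_inverse h h' ->
    in_comm_hP t ->
    aut_eq s (aut_comp (aut_comp (aut_comp g h) (aut_comp g' h')) t) ->
    in_comm_hP s.

(* s and t have the same class in the abelianization: t^{-1} s in [G,G] *)
Definition ab_eq n (s t : 'I_n -> word n) :=
  exists t', aut_inverse t t' /\ in_comm_hP (aut_comp t' s).

(* In RF_n the generator x_k commutes with each of its conjugates.  Hence a
   basis-conjugating substitution x_k |-> c_k^-1 x_k c_k maps every relator to
   a commutator of two conjugates of one generator, so it induces an
   endomorphism of RF_n; and the conjugator c_k may be stripped of its letters
   x_k^(+-1).  An element of hPSigma_n is then rebuilt generator by generator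
   as a product of the chi_kj^(+-1), read off the stripped conjugators.

   A product of chi's whose exponent sums all vanish is a product of
   commutators: some letter q is followed by its inverse, and
   q A q^-1 B = [q, A] (A B) with A B shorter.  So every element is congruent
   to prod chi_ij^(e_ij) modulo commutators.

   For independence, RF_n maps to the group Z^n x M_n(Z) with
   (x, X)(y, Y) = (x + y, X + Y + x^T y), via x_k |-> (e_k, 0): elements with
   the same first component commute there, which kills the relators.  An
   automorphism s fixing the first components acts by
   (x, X) |-> (x, X + sum_m x_m tau_m(s)), where tau_m(s) is the second
   component of the image of s(x_m); s |-> tau(s) is additive, hence vanishes
   on commutators, and tau_i(prod chi^e) has (i, j) entry e_ij. *)

From mathcomp Require Import all_boot all_algebra ring zify.
From Stdlib Require Import FunctionalExtensionality Setoid Morphisms.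
Set Implicit Arguments. Unset Strict Implicit. Unset Printing Implicit Defensive.
Import GRing.Theory.

#[global] Hint Resolve rf_refl : core.

Section FreeWords.
Variable n : nat.
Implicit Types (u v w x y c d : word n) (s t r : 'I_n -> word n) (a : letter n).

Lemma linvK : involutive (@linv n).
Proof. by case=> k b; rewrite /linv /= negbK. Qed.

Lemma winv_cat u v : winv (u ++ v) = winv v ++ winv u.
Proof. by rewrite /winv map_cat rev_cat. Qed.

Lemma winv_cons a w : winv (a :: w) = winv w ++ [:: linv a].
Proof. by rewrite /winv /= rev_cons cats1. Qed.

Lemma winvK : involutive (@winv n).
Proof.
move=> w; rewrite /winv map_rev revK -map_comp.
by rewrite (eq_map (g := id)) ?map_id // => a /=; rewrite linvK.
Qed.

Definition subst_letter s a : word n := if a.2 then s a.1 else winv (s a.1).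

Lemma wsubst_cons s a w : wsubst s (a :: w) = subst_letter s a ++ wsubst s w.
Proof. by []. Qed.

Lemma wsubst_cat s u v : wsubst s (u ++ v) = wsubst s u ++ wsubst s v.
Proof. by rewrite /wsubst map_cat flatten_cat. Qed.

Lemma wsubst_gen s k : wsubst s (gen k) = s k.
Proof. by rewrite wsubst_cons cats0. Qed.

Lemma subst_letter_linv s a : subst_letter s (linv a) = winv (subst_letter s a).
Proof. by case: a => k [] //; rewrite /subst_letter /= winvK. Qed.

Lemma wsubst_winv s w : wsubst s (winv w) = winv (wsubst s w).
Proof.
elim: w => //= a w IHw.
by rewrite winv_cons wsubst_cat IHw wsubst_cons cats0 subst_letter_linv winv_cat.
Qed.

Lemma wsubst_comp s t w : wsubst s (wsubst t w) = wsubst (aut_comp s t) w.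
Proof.
elim: w => // a w IHw; rewrite !wsubst_cons wsubst_cat IHw; congr (_ ++ _).
by rewrite /subst_letter; case: ifP => _; rewrite ?wsubst_winv.
Qed.

Lemma wsubst_id w : wsubst (@aut_id n) w = w.
Proof. by elim: w => // -[k b] w IHw; rewrite wsubst_cons IHw; case: b. Qed.

Lemma aut_compA s t r : aut_comp (aut_comp s t) r = aut_comp s (aut_comp t r).
Proof. by apply: functional_extensionality => k; rewrite /aut_comp wsubst_comp. Qed.

Lemma aut_comp_id s : aut_comp s (@aut_id n) = s.
Proof. by apply: functional_extensionality => k; rewrite /aut_comp wsubst_gen. Qed.

Lemma aut_id_comp s : aut_comp (@aut_id n) s = s.
Proof. by apply: functional_extensionality => k; rewrite /aut_comp wsubst_id. Qed.

Definition conj_gen w k : word n := winv w ++ gen k ++ w.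

Lemma wsubst_conj_gen s c d k : s k = conj_gen d k ->
  wsubst s (conj_gen c k) = conj_gen (d ++ wsubst s c) k.
Proof.
by move=> skE; rewrite /conj_gen !wsubst_cat wsubst_winv wsubst_gen skE winv_cat -!catA.
Qed.

End FreeWords.

Section ReducedFreeGroup.
Variable n : nat.
Implicit Types (u v w x y c d : word n) (s t r : 'I_n -> word n) (a : letter n).

#[global] Instance rf_eq_Equivalence : Equivalence (@rf_eq n).
Proof. by split; [exact: rf_refl | exact: rf_sym | exact: rf_trans]. Qed.

Lemma rf_ctx x y u v : rf_eq u v -> rf_eq (x ++ u ++ y) (x ++ v ++ y).
Proof.
elim=> {u v} [w|u v _ IH|u v w _ IH1 _ IH2|u v a|u v i w].
- by [].
- by symmetry.
- by transitivity (x ++ v ++ y).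
- by have := rf_cancel (x ++ u) (v ++ y) a; rewrite -!catA.
- by have := rf_rel (x ++ u) (v ++ y) i w; rewrite /wcomm -!catA.
Qed.

#[global] Instance cat_rf_eq_Proper : Proper (@rf_eq n ==> @rf_eq n ==> @rf_eq n) cat.
Proof.
move=> u u' uu' v v' vv'; transitivity (u' ++ v).
- by have := rf_ctx [::] v uu'.
- by have := rf_ctx u' [::] vv'; rewrite !cats0.
Qed.

#[global] Instance cons_rf_eq_Proper a : Proper (@rf_eq n ==> @rf_eq n) (cons a).
Proof. by move=> u v uv; have := rf_ctx [:: a] [::] uv; rewrite !cats0. Qed.

Lemma rf_catKV w y : rf_eq (w ++ winv w ++ y) y.
Proof.
elim: w y => // a w IHw y.
by rewrite winv_cons -!catA /= IHw; have := rf_cancel [::] y a.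
Qed.

Lemma rf_catK w y : rf_eq (winv w ++ w ++ y) y.
Proof. by have := rf_catKV (winv w) y; rewrite winvK. Qed.

Lemma rf_catV w : rf_eq (w ++ winv w) [::].
Proof. by have := rf_catKV w [::]; rewrite cats0. Qed.

Lemma rf_Vcat w : rf_eq (winv w ++ w) [::].
Proof. by have := rf_catK w [::]; rewrite cats0. Qed.

Lemma rf_wcomm_gen_conj i w : rf_eq (wcomm (gen i) (conj_gen w i)) [::].
Proof. by have := rf_rel [::] [::] i w; rewrite cats0. Qed.

#[global] Instance winv_rf_eq_Proper : Proper (@rf_eq n ==> @rf_eq n) (@winv n).
Proof.
move=> u v; elim=> {u v} [w|u v _ IH|u v w _ IH1 _ IH2|u v a|u v i w].
- by [].
- by symmetry.
- by transitivity (winv v).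
- by rewrite !winv_cat !winv_cons -!catA /= linvK; apply: rf_cancel.
- move: (rf_wcomm_gen_conj i w); set R := wcomm _ _; clearbody R => R1.
  by rewrite !winv_cat -catA -{2}[winv u](rf_catK R) [in R ++ _]R1.
Qed.

#[global] Instance conj_gen_rf_eq_Proper :
  Proper (@rf_eq n ==> eq ==> @rf_eq n) (@conj_gen n).
Proof. by move=> u v uv k _ <-; rewrite /conj_gen uv. Qed.

Lemma rf_conj_gen u v k : rf_eq u v -> rf_eq (conj_gen u k) (conj_gen v k).
Proof. by move=> ->. Qed.

Lemma aut_eq_refl s : aut_eq s s.
Proof. by []. Qed.

Lemma aut_eq_sym s t : aut_eq s t -> aut_eq t s.
Proof. by move=> st k; symmetry. Qed.

Lemma aut_eq_trans s t r : aut_eq s t -> aut_eq t r -> aut_eq s r.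
Proof. by move=> st tr k; transitivity (t k). Qed.

Lemma wsubst_aut_eq s t w : aut_eq s t -> rf_eq (wsubst s w) (wsubst t w).
Proof.
move=> st; elim: w => // a w IHw.
by rewrite !wsubst_cons IHw /subst_letter; case: ifP => _; rewrite st.
Qed.

Lemma aut_comp_eql s s' t : aut_eq s s' -> aut_eq (aut_comp s t) (aut_comp s' t).
Proof. by move=> ss' k; apply: wsubst_aut_eq. Qed.

Lemma aut_comp_eqr s t t' : respects s -> aut_eq t t' ->
  aut_eq (aut_comp s t) (aut_comp s t').
Proof. by move=> rs tt' k; apply: rs. Qed.

Lemma rf_commute_wcomm x y : rf_eq (wcomm x y) [::] -> rf_eq (x ++ y) (y ++ x).
Proof. by move=> xy1; rewrite -[y ++ x]cat0s -xy1 /wcomm -!catA rf_catK rf_Vcat cats0. Qed.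

Lemma rf_commute_winv x y : rf_eq (x ++ y) (y ++ x) -> rf_eq (winv x ++ y) (y ++ winv x).
Proof.
by move/(rf_ctx (winv x) (winv x)); rewrite -!catA rf_catK rf_catV cats0 => ->.
Qed.

Lemma rf_conj_commute x y : rf_eq (x ++ y) (y ++ x) -> rf_eq (winv x ++ y ++ x) y.
Proof. by move=> xy; rewrite -xy rf_catK. Qed.

Lemma gen_commute_conj_gen k w :
  rf_eq (gen k ++ conj_gen w k) (conj_gen w k ++ gen k).
Proof. exact/rf_commute_wcomm/rf_wcomm_gen_conj. Qed.

Definition strip k w : word n := [seq a <- w | a.1 != k].

Lemma conj_gen_strip k w : rf_eq (conj_gen w k) (conj_gen (strip k w) k).
Proof.
elim/last_ind: w => // w a IHw.
have conj_rcons u : conj_gen (rcons u a) k = [:: linv a] ++ conj_gen u k ++ [:: a].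
  by rewrite /conj_gen -cats1 winv_cat -!catA.
rewrite /strip filter_rcons -/(strip k w) conj_rcons IHw.
case: ifP => [_|/negbFE/eqP a1k]; first by rewrite conj_rcons.
case: a {conj_rcons} a1k => _ b /= ->; have kC := gen_commute_conj_gen k (strip k w); case: b.
- exact: (rf_conj_commute (x := gen k)).
- exact: (rf_conj_commute (x := winv (gen k)) (rf_commute_winv kC)).
Qed.

(* This commutator is the conjugate by [c] of a defining relator. *)
Lemma rf_wcomm_conj_gen i c d : rf_eq (wcomm (conj_gen c i) (conj_gen d i)) [::].
Proof.
transitivity (winv c ++ wcomm (gen i) (conj_gen (d ++ winv c) i) ++ c).
  have <- : wcomm (conj_gen c i) (conj_gen d i) ++ winv c ++ c =
            winv c ++ wcomm (gen i) (conj_gen (d ++ winv c) i) ++ c.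
    by rewrite /wcomm /conj_gen !winv_cat !winvK -!catA.
  by rewrite rf_Vcat cats0.
by rewrite rf_wcomm_gen_conj /= rf_Vcat.
Qed.

Lemma wsubst_wcomm s x y : wsubst s (wcomm x y) = wcomm (wsubst s x) (wsubst s y).
Proof. by rewrite /wcomm !wsubst_cat !wsubst_winv. Qed.

Definition basis_conjugating s := forall k, exists c, s k = conj_gen c k.

Lemma respects_basis_conjugating s : basis_conjugating s -> respects s.
Proof.
move=> sbc u v; elim=> {u v} [w|u v _ IH|u v w _ IH1 _ IH2|u v a|u v i w].
- by [].
- by symmetry.
- by transitivity (wsubst s v).
- by rewrite !wsubst_cat !wsubst_cons subst_letter_linv rf_catKV.
- set R := wcomm _ _; have R1 : rf_eq (wsubst s R) [::].
    have [c sic] := sbc i.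
    rewrite /R -/(conj_gen w i) wsubst_wcomm wsubst_gen (wsubst_conj_gen _ sic) sic.
    exact: rf_wcomm_conj_gen.
  by clearbody R; rewrite !wsubst_cat R1.
Qed.

Lemma basis_conjugating_comp s t :
  basis_conjugating s -> basis_conjugating t -> basis_conjugating (aut_comp s t).
Proof.
move=> sbc tbc k; rewrite /aut_comp; have [c ->] := tbc k; have [d skE] := sbc k.
by exists (d ++ wsubst s c); apply: wsubst_conj_gen.
Qed.

End ReducedFreeGroup.

Section ChiWords.
Variable n : nat.
Implicit Types (w c : word n) (s t : 'I_n -> word n) (q : 'I_n * 'I_n * bool)
  (l : seq ('I_n * 'I_n * bool)).

Definition chi_sgn q : 'I_n -> word n :=
  if q.2 then chi q.1.1 q.1.2 else chi_inv q.1.1 q.1.2.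
Definition flip_sgn q : 'I_n * 'I_n * bool := (q.1, ~~ q.2).
Definition chi_winv l := rev (map flip_sgn l).
Definition offdiag_word l := all (fun q => q.1.1 != q.1.2) l.

Lemma offdiag_word_cons q l : offdiag_word (q :: l) = (q.1.1 != q.1.2) && offdiag_word l.
Proof. by []. Qed.

Lemma offdiag_word_cat l1 l2 :
  offdiag_word (l1 ++ l2) = offdiag_word l1 && offdiag_word l2.
Proof. exact: all_cat. Qed.

Lemma chi_prod_cons q l : chi_prod (q :: l) = aut_comp (chi_sgn q) (chi_prod l).
Proof. by case: q => [[i j] b]. Qed.

Lemma chi_prod1 q : chi_prod [:: q] = chi_sgn q.
Proof. by rewrite chi_prod_cons aut_comp_id. Qed.

Lemma chi_prod_cat l1 l2 : chi_prod (l1 ++ l2) = aut_comp (chi_prod l1) (chi_prod l2).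
Proof.
elim: l1 => [|q l1 IHl]; first by rewrite aut_id_comp.
by rewrite cat_cons !chi_prod_cons IHl aut_compA.
Qed.

Lemma conj_gen_nil k : conj_gen [::] k = gen k :> word n.
Proof. by rewrite /conj_gen cats0. Qed.

Lemma chi_sgnE q k :
  chi_sgn q k = conj_gen (if k == q.1.1 then [:: (q.1.2, q.2)] else [::]) k.
Proof.
by case: q => [[i j] []]; rewrite /chi_sgn /chi /chi_inv /=;
  case: eqP => [->|_]; rewrite ?conj_gen_nil.
Qed.

Lemma chi_sgn_fix q k : k != q.1.1 -> chi_sgn q k = gen k.
Proof. by move/negbTE=> kq; rewrite chi_sgnE kq conj_gen_nil. Qed.

Lemma basis_conjugating_chi_prod l : basis_conjugating (chi_prod l).
Proof.
elim: l => [|q l IHl]; first by exists [::]; rewrite conj_gen_nil.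
rewrite chi_prod_cons; apply: basis_conjugating_comp IHl => k.
by exists (if k == q.1.1 then [:: (q.1.2, q.2)] else [::]); apply: chi_sgnE.
Qed.

Lemma respects_chi_prod l : respects (chi_prod l).
Proof. exact/respects_basis_conjugating/basis_conjugating_chi_prod. Qed.

Lemma respects_chi_sgn q : respects (chi_sgn q).
Proof. by rewrite -chi_prod1; apply: respects_chi_prod. Qed.

#[global] Instance wsubst_chi_prod_Proper l :
  Proper (@rf_eq n ==> @rf_eq n) (wsubst (chi_prod l)).
Proof. exact: respects_chi_prod. Qed.

Lemma chi_sgnK q : q.1.1 != q.1.2 ->
  aut_eq (aut_comp (chi_sgn q) (chi_sgn (flip_sgn q))) (@aut_id n).
Proof.
case: q => [[i j] b] /= ij k; rewrite /aut_comp.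
have [->|ki] := eqVneq k i; last by rewrite chi_sgn_fix // wsubst_gen chi_sgn_fix.
have Ei : chi_sgn (i, j, b) i = conj_gen [:: (j, b)] i by rewrite chi_sgnE /= eqxx.
rewrite chi_sgnE /= eqxx (wsubst_conj_gen _ Ei) wsubst_cons /subst_letter /=.
rewrite chi_sgn_fix /=; last by rewrite eq_sym.
rewrite /aut_id -(conj_gen_nil i); apply: rf_conj_gen.
by case: b {Ei}; apply: (rf_cancel [::] [::]).
Qed.

Lemma chi_winv_cons q l : chi_winv (q :: l) = chi_winv l ++ [:: flip_sgn q].
Proof. by rewrite /chi_winv /= rev_cons cats1. Qed.

Lemma chi_winvK : involutive chi_winv.
Proof.
move=> l; rewrite /chi_winv map_rev revK -map_comp.
by rewrite (eq_map (g := id)) ?map_id // => -[p b] /=; rewrite /flip_sgn negbK.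
Qed.

Lemma offdiag_chi_winv l : offdiag_word (chi_winv l) = offdiag_word l.
Proof. by rewrite /offdiag_word /chi_winv all_rev all_map. Qed.

Lemma chi_prod_catV l : offdiag_word l -> aut_eq (chi_prod (l ++ chi_winv l)) (@aut_id n).
Proof.
elim: l => [_|q l IHl]; first exact: aut_eq_refl.
rewrite offdiag_word_cons => /andP [qij lij].
rewrite chi_winv_cons catA cat_cons chi_prod_cons chi_prod_cat chi_prod1.
apply: aut_eq_trans (chi_sgnK qij); apply: aut_comp_eqr; first exact: respects_chi_sgn.
by have := aut_comp_eql (chi_sgn (flip_sgn q)) (IHl lij); rewrite aut_id_comp.
Qed.

Lemma chi_prod_Vcat l : offdiag_word l -> aut_eq (chi_prod (chi_winv l ++ l)) (@aut_id n).
Proof. by have := chi_prod_catV (l := chi_winv l); rewrite chi_winvK offdiag_chi_winv. Qed.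

Lemma aut_inverse_chi_prod l : offdiag_word l ->
  aut_inverse (chi_prod l) (chi_prod (chi_winv l)).
Proof.
split; rewrite -?chi_prod_cat;
  by [apply: respects_chi_prod | apply: chi_prod_catV | apply: chi_prod_Vcat].
Qed.

Lemma in_hPSigma_chi_prod l : offdiag_word l -> in_hPSigma (chi_prod l).
Proof.
move=> lij; split; first by exists (chi_prod (chi_winv l)); apply: aut_inverse_chi_prod.
by move=> k; have [c ->] := basis_conjugating_chi_prod l k; exists c.
Qed.

Lemma in_hPSigma_chi (i j : 'I_n) : i != j -> in_hPSigma (chi i j).
Proof.
by move=> ij; have := in_hPSigma_chi_prod (l := [:: (i, j, true)]); rewrite chi_prod1 /= ij; apply.
Qed.

End ChiWords.

Section Generation.
Variable n : nat.
Implicit Types (w c : word n) (s : 'I_n -> word n) (l : seq ('I_n * 'I_n * bool)).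

Definition chi_conj_word k w : seq ('I_n * 'I_n * bool) :=
  [seq (k, a.1, a.2) | a <- strip k w].

Lemma offdiag_chi_conj_word k w : offdiag_word (chi_conj_word k w).
Proof.
by rewrite /offdiag_word all_map; apply/allP => a; rewrite mem_filter eq_sym => /andP [].
Qed.

Lemma wsubst_fix s w : {in w, forall a, s a.1 = gen a.1} -> wsubst s w = w.
Proof.
elim: w => // a w IHw sw; rewrite wsubst_cons IHw => [|b wb]; last first.
  by apply: sw; rewrite inE wb orbT.
by rewrite /subst_letter sw ?mem_head //; case: a {sw} => k [].
Qed.

Lemma chi_prod_fix l m : all (fun q => q.1.1 != m) l -> chi_prod l m = gen m.
Proof.
elim: l => // q l IHl /andP [qm lm].
by rewrite chi_prod_cons /aut_comp IHl // wsubst_gen chi_sgn_fix // eq_sym.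
Qed.

Lemma chi_prod_chi_conj_word k w : chi_prod (chi_conj_word k w) k = conj_gen (strip k w) k.
Proof.
elim: w => [|a w IHw]; first by rewrite conj_gen_nil.
rewrite /chi_conj_word /strip /=; case: ifP => // ak.
have chi_k : chi_sgn (k, a.1, a.2) k = conj_gen [:: a] k by rewrite chi_sgnE eqxx; case: a {ak}.
rewrite chi_prod_cons /aut_comp IHw (wsubst_conj_gen _ chi_k) wsubst_fix // => b.
by rewrite mem_filter => /andP [bk _]; apply: chi_sgn_fix.
Qed.

Lemma chi_prod_chi_conj_word_fix k w m : m != k -> chi_prod (chi_conj_word k w) m = gen m.
Proof.
by move=> mk; apply: chi_prod_fix; rewrite all_map; apply/allP => a _ /=; rewrite eq_sym.
Qed.

(* The conjugator of s(x_k) is first pulled back through the inverse of the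
   product [l] built so far, so that applying [l] afterwards restores it. *)
Lemma chi_prod_agree_on s : in_hPSigma s -> forall ks : seq 'I_n, uniq ks ->
  exists l, [/\ offdiag_word l, all (fun q => q.1.1 \in ks) l &
                {in ks, forall k, rf_eq (chi_prod l k) (s k)}].
Proof.
move=> hs; elim/last_ind => [|ks k IHks]; first by exists [::].
rewrite rcons_uniq => /andP [kNks /IHks [l [lij lks sl]]].
have [c skE] := hs.2 k; set w := wsubst (chi_prod (chi_winv l)) c.
have lk : chi_prod l k = conj_gen [::] k.
  rewrite conj_gen_nil; apply: chi_prod_fix.
  by apply/allP => q /(allP lks) qks; apply: contraNneq kNks => <-.
exists (l ++ chi_conj_word k w); split.
- by rewrite offdiag_word_cat lij offdiag_chi_conj_word.
- rewrite all_cat; apply/andP; split.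
    by apply/allP => q /(allP lks); rewrite mem_rcons inE orbC => ->.
  by rewrite all_map; apply/allP => a _ /=; rewrite mem_rcons mem_head.
move=> m; rewrite mem_rcons inE chi_prod_cat /aut_comp.
have [-> _|mk mks] := eqVneq m k; last by rewrite chi_prod_chi_conj_word_fix // wsubst_gen sl.
rewrite chi_prod_chi_conj_word -conj_gen_strip skE.
rewrite (wsubst_conj_gen _ lk) /w wsubst_comp -chi_prod_cat.
by rewrite (wsubst_aut_eq c (chi_prod_catV lij)) wsubst_id.
Qed.

Lemma chi_prod_generates s : in_hPSigma s ->
  exists l, offdiag_word l /\ aut_eq s (chi_prod l).
Proof.
move=> hs; have [l [lij _ sl]] := chi_prod_agree_on hs (enum_uniq 'I_n).
by exists l; split=> // k; rewrite sl ?mem_enum.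
Qed.

End Generation.

Section CommutatorSubgroup.
Variable n : nat.
Local Open Scope ring_scope.
Implicit Types (s t : 'I_n -> word n) (q : 'I_n * 'I_n * bool) (l : seq ('I_n * 'I_n * bool)).

Definition exp_sum l (p : 'I_n * 'I_n) : int :=
  (count_mem (p, true) l)%:Z - (count_mem (p, false) l)%:Z.

Lemma exp_sum_cat l1 l2 p : exp_sum (l1 ++ l2) p = exp_sum l1 p + exp_sum l2 p.
Proof. by rewrite /exp_sum !count_cat !PoszD; ring. Qed.

Lemma exp_sum_chi_winv l p : exp_sum (chi_winv l) p = - exp_sum l p.
Proof.
have count_flip b : count_mem (p, b) (chi_winv l) = count_mem (p, ~~ b) l.
  rewrite count_rev count_map; apply: eq_count => -[p' b'].
  by rewrite /flip_sgn /= !xpair_eqE; case: b'; case: b.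
by rewrite /exp_sum !count_flip /=; ring.
Qed.

Lemma exp_sum_diag l p : offdiag_word l -> p.1 = p.2 -> exp_sum l p = 0.
Proof.
move=> lij pp; have pNl b : (p, b) \notin l.
  by apply/negP => /(allP lij) /=; rewrite pp eqxx.
by rewrite /exp_sum !(count_memPn (pNl _)).
Qed.

Lemma mem_flip_sgn q l : exp_sum (q :: l) q.1 = 0 -> flip_sgn q \in l.
Proof.
case: q => p b; apply: contra_eqT => /count_memPn flipNl.
case: b flipNl; rewrite /flip_sgn /exp_sum /= => ->; by rewrite !xpair_eqE !eqxx /=; lia.
Qed.

Lemma in_comm_hP_aut_eq s t : in_comm_hP s -> aut_eq s t -> in_comm_hP t.
Proof.
case=> [s' s1|s' g g' h h' r hg gg' hh hh' cr sE] st.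
  by apply: cs_id; apply: aut_eq_trans s1; apply: aut_eq_sym.
by apply: (cs_mul hg gg' hh hh' cr); apply: aut_eq_trans sE; apply: aut_eq_sym.
Qed.

Lemma chi_prod_cancel_mid x y z : aut_eq (chi_prod y) (@aut_id n) ->
  aut_eq (chi_prod (x ++ y ++ z)) (chi_prod (x ++ z)).
Proof.
move=> y1; rewrite !chi_prod_cat; apply: aut_comp_eqr; first exact: respects_chi_prod.
by have := aut_comp_eql (chi_prod z) y1; rewrite aut_id_comp.
Qed.

Lemma chi_prod_commutator q A B : offdiag_word A ->
  aut_eq (chi_prod (q :: A ++ flip_sgn q :: B))
    (aut_comp (aut_comp (aut_comp (chi_prod [:: q]) (chi_prod A))
                        (aut_comp (chi_prod [:: flip_sgn q]) (chi_prod (chi_winv A))))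
              (chi_prod (A ++ B))).
Proof.
move=> Aij; rewrite -!chi_prod_cat -!catA; apply: aut_eq_sym.
have := chi_prod_cancel_mid ([:: q] ++ A ++ [:: flip_sgn q]) B (chi_prod_Vcat Aij).
by rewrite -!catA.
Qed.

Lemma in_comm_hP_exp_sum0 l : offdiag_word l -> (forall p, exp_sum l p = 0) ->
  in_comm_hP (chi_prod l).
Proof.
move: {2}(size l) (leqnn (size l)) => N; elim: N l => [|N IHN] [|q l] // lN;
  try by move=> *; apply: cs_id; apply: aut_eq_refl.
rewrite offdiag_word_cons => /andP [qij lij] l0.
have fq := mem_flip_sgn (l0 q.1); move: fq lN lij l0; case/splitPr => A B lN ABij l0.
move: ABij; rewrite offdiag_word_cat offdiag_word_cons => /and3P [Aij _ Bij].
have qij' : offdiag_word [:: q] by rewrite /= qij.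
apply: in_comm_hP_aut_eq (aut_eq_sym (chi_prod_commutator q B Aij)).
apply: (cs_mul (in_hPSigma_chi_prod qij') (aut_inverse_chi_prod qij')
               (in_hPSigma_chi_prod Aij) (aut_inverse_chi_prod Aij)); last exact: aut_eq_refl.
apply: IHN.
- by move: lN; rewrite /= !size_cat /=; lia.
- by rewrite offdiag_word_cat; apply/andP.
move=> p; have := l0 p.
rewrite (_ : q :: A ++ flip_sgn q :: B = [:: q] ++ A ++ chi_winv [:: q] ++ B) //.
by rewrite !exp_sum_cat exp_sum_chi_winv; lia.
Qed.

End CommutatorSubgroup.

Section Spanning.
Variable n : nat.
Local Open Scope ring_scope.
Implicit Types (s : 'I_n -> word n) (p : 'I_n * 'I_n) (l : seq ('I_n * 'I_n * bool)).

Definition chi_pow_word p (z : int) : seq ('I_n * 'I_n * bool) :=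
  match z with Posz k => nseq k (p, true) | Negz k => nseq k.+1 (p, false) end.

Definition chi_lin_word (e : 'I_n -> 'I_n -> int) : seq ('I_n * 'I_n * bool) :=
  flatten [seq chi_pow_word p (e p.1 p.2) | p <- offdiag n].

Lemma chi_pow_chi_prod (i j : 'I_n) z : chi_pow i j z = chi_prod (chi_pow_word (i, j) z).
Proof.
case: z => k /=; first by elim: k => //= k ->.
by elim: k => [|k IHk]; rewrite ?iterS ?IHk //= aut_comp_id.
Qed.

Lemma chi_lin_chi_prod e : chi_lin e = chi_prod (chi_lin_word e).
Proof.
rewrite /chi_lin /chi_lin_word; elim: (offdiag n) => //= p ps ->.
by rewrite chi_prod_cat chi_pow_chi_prod; case: p.
Qed.

Lemma mem_offdiag p : (p \in offdiag n) = (p.1 != p.2).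
Proof. by rewrite mem_filter mem_enum andbT. Qed.

Lemma offdiag_chi_lin_word e : offdiag_word (chi_lin_word e).
Proof.
apply/allP => q /flattenP [_ /mapP [p pij ->]]; rewrite mem_offdiag in pij.
by case: (e p.1 p.2) => k /nseqP [-> _].
Qed.

Lemma exp_sum_chi_pow_word p' p z :
  exp_sum (chi_pow_word p' z) p = if p' == p then z else 0.
Proof.
rewrite /exp_sum; case: z => k /=; rewrite !count_nseq /= !xpair_eqE !andbT !andbF;
  case: (p' == p); rewrite ?mul0n ?mul1n ?subr0 //.
by rewrite sub0r NegzE.
Qed.

Lemma exp_sum_chi_lin_word e p :
  exp_sum (chi_lin_word e) p = if p.1 != p.2 then e p.1 p.2 else 0.
Proof.
rewrite /chi_lin_word -mem_offdiag.
have : uniq (offdiag n) by rewrite filter_uniq ?enum_uniq.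
elim: (offdiag n) => //= p0 ps IHps /andP [p0Nps ups].
rewrite exp_sum_cat IHps // exp_sum_chi_pow_word in_cons.
by have [<-|_] := eqVneq p0 p; rewrite ?(negbTE p0Nps) ?addr0 ?add0r.
Qed.

Lemma chi_lin_spans s : in_hPSigma s -> exists e, ab_eq s (chi_lin e).
Proof.
move=> hs; have [l [lij sl]] := chi_prod_generates hs.
pose e i j := exp_sum l (i, j); exists e, (chi_prod (chi_winv (chi_lin_word e))).
rewrite chi_lin_chi_prod; split; first exact/aut_inverse_chi_prod/offdiag_chi_lin_word.
apply: (@in_comm_hP_aut_eq _ (chi_prod (chi_winv (chi_lin_word e) ++ l))).
  apply: in_comm_hP_exp_sum0 => [|p].
    by rewrite offdiag_word_cat offdiag_chi_winv offdiag_chi_lin_word.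
  rewrite exp_sum_cat exp_sum_chi_winv exp_sum_chi_lin_word.
  case: ifPn => [_|/negPn/eqP pp]; first by rewrite /e -surjective_pairing addNr.
  by rewrite (exp_sum_diag lij pp) subr0.
rewrite chi_prod_cat; apply: aut_comp_eqr; [exact: respects_chi_prod | exact: aut_eq_sym].
Qed.
End Spanning.

Section HeisenbergQuotient.
Variable n : nat.
Local Open Scope ring_scope.
Implicit Types (u v w c : word n) (s t : 'I_n -> word n) (a : letter n).

Definition heis := ('rV[int]_n * 'M[int]_n)%type.
Definition outer (x y : 'rV[int]_n) : 'M[int]_n := \matrix_(i, j) (x 0 i * y 0 j).
Definition heis_one : heis := (0, 0).
Definition heis_mul (g h : heis) : heis := (g.1 + h.1, g.2 + h.2 + outer g.1 h.1).
Definition heis_inv (g : heis) : heis := (- g.1, - g.2 + outer g.1 g.1).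

Lemma heis_ext (g h : heis) :
  (forall j, g.1 0 j = h.1 0 j) -> (forall i j, g.2 i j = h.2 i j) -> g = h.
Proof.
by case: g h => [x X] [y Y] /= xy XY; congr pair; apply/matrixP => i j; rewrite ?(ord1 i).
Qed.

Ltac heis_ring := apply: heis_ext => /= *; rewrite ?mxE; ring.

Lemma heis_mulA g h k : heis_mul g (heis_mul h k) = heis_mul (heis_mul g h) k.
Proof. heis_ring. Qed.
Lemma heis_mulg1 g : heis_mul g heis_one = g.
Proof. heis_ring. Qed.
Lemma heis_mul1g g : heis_mul heis_one g = g.
Proof. heis_ring. Qed.
Lemma heis_mulgV g : heis_mul g (heis_inv g) = heis_one.
Proof. heis_ring. Qed.
Lemma heis_mulVg g : heis_mul (heis_inv g) g = heis_one.
Proof. heis_ring. Qed.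
Lemma heis_invK g : heis_inv (heis_inv g) = g.
Proof. heis_ring. Qed.
Lemma heis_invM g h : heis_inv (heis_mul g h) = heis_mul (heis_inv h) (heis_inv g).
Proof. heis_ring. Qed.

Lemma heis_comm_same_abelian (g h : heis) : g.1 = h.1 ->
  heis_mul g (heis_mul h (heis_mul (heis_inv g) (heis_inv h))) = heis_one.
Proof. by case: g h => [x X] [y Y] /= <-; heis_ring. Qed.

Definition unit_row k : 'rV[int]_n := delta_mx 0 k.
Definition heis_letter a : heis :=
  if a.2 then (unit_row a.1, 0) else heis_inv (unit_row a.1, 0).
Definition heval w : heis := foldr (fun a g => heis_mul (heis_letter a) g) heis_one w.

Lemma heval_cat u v : heval (u ++ v) = heis_mul (heval u) (heval v).
Proof. by elim: u => [|a u IHu] /=; rewrite ?heis_mul1g // IHu heis_mulA. Qed.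

Lemma heis_letter_linv a : heis_letter (linv a) = heis_inv (heis_letter a).
Proof. by case: a => k [] //; rewrite /heis_letter /= heis_invK. Qed.

Lemma heval_winv w : heval (winv w) = heis_inv (heval w).
Proof.
elim: w => [|a w IHw]; first by heis_ring.
by rewrite winv_cons heval_cat IHw /= heis_mulg1 heis_letter_linv heis_invM.
Qed.

Lemma heval1 a : heval [:: a] = heis_letter a.
Proof. exact: heis_mulg1. Qed.

Lemma heval_gen k : heval (gen k) = (unit_row k, 0).
Proof. exact: heval1. Qed.

Lemma heval_conj_gen c k : heval (conj_gen c k) =
  (unit_row k, outer (unit_row k) (heval c).1 - outer (heval c).1 (unit_row k)).
Proof.
rewrite /conj_gen !heval_cat heval_winv heval_gen.
by case: (heval c) => x X; heis_ring.
Qed.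

Lemma heval_wcomm u v : heval (wcomm u v) =
  heis_mul (heval u) (heis_mul (heval v) (heis_mul (heis_inv (heval u)) (heis_inv (heval v)))).
Proof. by rewrite /wcomm !heval_cat !heval_winv. Qed.

Lemma heval_rf_eq u v : rf_eq u v -> heval u = heval v.
Proof.
elim=> {u v} // [u v w _ -> _ -> //|u v a|u v i w].
  rewrite !heval_cat /= heis_letter_linv; congr heis_mul.
  by rewrite heis_mulA heis_mulgV heis_mul1g.
rewrite -/(conj_gen w i) !(heval_cat u) (heval_cat _ v) heval_wcomm.
by rewrite heis_comm_same_abelian ?heis_mul1g // heval_gen heval_conj_gen.
Qed.

Definition twist (D : 'I_n -> 'M[int]_n) (g : heis) : heis :=
  (g.1, g.2 + \sum_m g.1 0 m *: D m).

Lemma twist_mul D g h : twist D (heis_mul g h) = heis_mul (twist D g) (twist D h).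
Proof.
have sumD : \sum_m (g.1 + h.1) 0 m *: D m = \sum_m g.1 0 m *: D m + \sum_m h.1 0 m *: D m.
  by rewrite -big_split; apply: eq_bigr => m _; rewrite mxE scalerDl.
by rewrite /twist /= sumD; heis_ring.
Qed.

Lemma twist_one D : twist D heis_one = heis_one.
Proof. by rewrite /twist /= big1 ?addr0 // => m _; rewrite mxE scale0r. Qed.

Lemma twist_inv D g : twist D (heis_inv g) = heis_inv (twist D g).
Proof.
have gVg : heis_mul (twist D g) (twist D (heis_inv g)) = heis_one.
  by rewrite -twist_mul heis_mulgV twist_one.
by rewrite -[twist D (heis_inv g)]heis_mul1g -(heis_mulVg (twist D g)) -heis_mulA gVg heis_mulg1.
Qed.

Lemma twist_unit_row D k X : twist D (unit_row k, X) = (unit_row k, X + D k).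
Proof.
rewrite /twist /=; congr (_, _ + _).
rewrite (bigD1 k) //= big1 ?addr0 => [|m mk]; rewrite mxE eqxx /=.
  by rewrite eqxx scale1r.
by rewrite (negbTE mk) scale0r.
Qed.

Definition ab_trivial s := forall k, (heval (s k)).1 = unit_row k.
Definition tau s k : 'M[int]_n := (heval (s k)).2.

Lemma heval_ab_trivial s k : ab_trivial s -> heval (s k) = (unit_row k, tau s k).
Proof. by move=> s1; rewrite /tau -(s1 k) -surjective_pairing. Qed.

Lemma heval_wsubst s w : ab_trivial s -> heval (wsubst s w) = twist (tau s) (heval w).
Proof.
move=> s1; elim: w => [|a w IHw]; first by rewrite twist_one.
rewrite wsubst_cons heval_cat IHw /= twist_mul; congr heis_mul.
case: a => k [] /=; rewrite /subst_letter /heis_letter /=.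
  by rewrite heval_ab_trivial // twist_unit_row add0r.
by rewrite heval_winv heval_ab_trivial // twist_inv twist_unit_row add0r.
Qed.

Lemma heval_aut_comp s t k : ab_trivial s -> ab_trivial t ->
  heval (aut_comp s t k) = (unit_row k, tau t k + tau s k).
Proof. by move=> s1 t1; rewrite /aut_comp heval_wsubst // heval_ab_trivial // twist_unit_row. Qed.

Lemma ab_trivial_comp s t : ab_trivial s -> ab_trivial t -> ab_trivial (aut_comp s t).
Proof. by move=> s1 t1 k; rewrite heval_aut_comp. Qed.

Lemma tau_comp s t k : ab_trivial s -> ab_trivial t ->
  tau (aut_comp s t) k = tau t k + tau s k.
Proof. by move=> s1 t1; rewrite /tau heval_aut_comp. Qed.

Lemma ab_trivial_basis_conjugating s :
  (forall k, exists c, rf_eq (s k) (conj_gen c k)) -> ab_trivial s.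
Proof. by move=> sc k; have [c /heval_rf_eq ->] := sc k; rewrite heval_conj_gen. Qed.

Lemma tau_right_inverse g g' : ab_trivial g -> aut_eq (aut_comp g g') (@aut_id n) ->
  ab_trivial g' /\ forall k, tau g' k = - tau g k.
Proof.
move=> g1 gg'; have E k : twist (tau g) (heval (g' k)) = (unit_row k, 0).
  by rewrite -heval_wsubst // -heval_gen; apply: heval_rf_eq; apply: gg'.
have g'1 : ab_trivial g' by move=> k; have := E k; rewrite /twist => -[].
split=> // k; have := E k; rewrite heval_ab_trivial // twist_unit_row => -[] /eqP.
by rewrite addr_eq0 => /eqP.
Qed.

Lemma tau_in_comm_hP s : in_comm_hP s -> ab_trivial s /\ forall k, tau s k = 0.
Proof.
have trivial_of_heval t : (forall k, heval (t k) = (unit_row k, 0)) ->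
    ab_trivial t /\ forall k, tau t k = 0.
  by move=> tE; split=> k; rewrite /tau tE.
elim=> {s} [s s1|s g g' h h' r hg gg' hh hh' _ [r1 r0] sE]; apply: trivial_of_heval => k.
  by rewrite (heval_rf_eq (s1 k)) heval_gen.
have g1 := ab_trivial_basis_conjugating hg.2; have h1 := ab_trivial_basis_conjugating hh.2.
have [g'1 g'V] := tau_right_inverse g1 (let: And4 _ _ gg'1 _ := gg' in gg'1).
have [h'1 h'V] := tau_right_inverse h1 (let: And4 _ _ hh'1 _ := hh' in hh'1).
have gh1 := ab_trivial_comp g1 h1; have gh'1 := ab_trivial_comp g'1 h'1.
have := ab_trivial_comp gh1 gh'1 => ghgh'1.
rewrite (heval_rf_eq (sE k)) heval_aut_comp // !tau_comp //.
by rewrite r0 g'V h'V; congr pair; apply/matrixP => i j; rewrite !mxE; ring.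
Qed.
End HeisenbergQuotient.

Section Independence.
Variable n : nat.
Local Open Scope ring_scope.
Implicit Types (q : 'I_n * 'I_n * bool) (l : seq ('I_n * 'I_n * bool)).

Lemma ab_trivial_chi_prod l : ab_trivial (chi_prod l).
Proof.
apply: ab_trivial_basis_conjugating => k.
by have [c ->] := basis_conjugating_chi_prod l k; exists c.
Qed.

Lemma tau_chi_sgn q (i j : 'I_n) : i != j -> tau (chi_sgn q) i i j = exp_sum [:: q] (i, j).
Proof.
move=> ij; rewrite /tau chi_sgnE heval_conj_gen /= !mxE !eqxx mul1r (eq_sym j) (negbTE ij).
rewrite mulr0 subr0; case: q => [[x y] b]; rewrite /exp_sum /= !xpair_eqE /=.
have [_|_] := eqVneq i x; last by rewrite /= mxE.
by rewrite heval1 /heis_letter; case: b; rewrite /= !mxE /= eq_sym; case: (y == j).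
Qed.

Lemma tau_chi_prod l (i j : 'I_n) : i != j -> tau (chi_prod l) i i j = exp_sum l (i, j).
Proof.
move=> ij; elim: l => [|q l IHl]; first by rewrite /tau /aut_id heval_gen mxE.
rewrite chi_prod_cons tau_comp; last 2 first.
- by rewrite -chi_prod1; apply: ab_trivial_chi_prod.
- exact: ab_trivial_chi_prod.
by rewrite mxE IHl tau_chi_sgn // addrC -exp_sum_cat.
Qed.

Lemma chi_lin_independent (e : 'I_n -> 'I_n -> int) : in_comm_hP (chi_lin e) ->
  forall i j : 'I_n, i != j -> e i j = 0.
Proof.
move=> ce i j ij; have [_ /(_ i)/matrixP/(_ i j)] := tau_in_comm_hP ce.
by rewrite chi_lin_chi_prod tau_chi_prod // exp_sum_chi_lin_word /= ij mxE.
Qed.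

End Independence.

Theorem corollary3p10 (n : nat) (hn : (2 <= n)%N) :
  (* each chi_ij lies in hPSigma_n *)
  (forall i j : 'I_n, i != j -> in_hPSigma (chi i j)) /\
  (* hPSigma_n is generated by the chi_ij *)
  (forall s : 'I_n -> word n, in_hPSigma s ->
     exists l : seq ('I_n * 'I_n * bool),
       all (fun p => p.1.1 != p.1.2) l /\ aut_eq s (chi_prod l)) /\
  (* the classes chi-bar_ij span hPSigma_n^ab ... *)
  (forall s : 'I_n -> word n, in_hPSigma s ->
     exists e : 'I_n -> 'I_n -> int, ab_eq s (chi_lin e)) /\
  (* ... and are Z-linearly independent there *)
  (forall e : 'I_n -> 'I_n -> int, in_comm_hP (chi_lin e) ->
     forall i j : 'I_n, i != j -> e i j = 0%R).
Proof.
split; first exact: in_hPSigma_chi.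
split; first exact: chi_prod_generates.
split; first exact: chi_lin_spans.
exact: chi_lin_independent.
Qed.
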